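(* Let $X_1,X_2,\dots$ be i.i.d. random variables each taking the values $-1,0,1$ with probability $1/3$ each. Then there exists a constant $c_7>0$ such that for all $N\in\mathbb{N}$, $$c_7\le\mathbb{P}^{(N)}_{\mathcal{R}}\Big(\bigcup_{n=1}^N\{\mathcal{R}^{(N)}_n=(n\bmod N)\}\Big).$$
   Context: $X_j$ live on $(\Omega,\mathcal{F},P)$, $S_n=\sum_{j=1}^nX_j$. For $N\in\mathbb{N}$, $X^{(N)}_0$ is uniform on $\{0,\dots,N-1\}$ under $(\Omega_N,\mathcal{F}_N,\mu_N)$; $(b\bmod N)$ is the remainder of $b\in\mathbb{Z}$ divided by $N$; $\mathcal{R}^{(N)}_n=(X^{(N)}_0+S_n\bmod N)$; $\mathbb{P}^{(N)}_{\mathcal{R}}=\mu_N\times P$. (This is the situation where the hunter moves one step forward each time.) *)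

From HB Require Import structures.
From mathcomp Require Import all_boot all_order all_algebra.
From mathcomp Require Import all_classical all_reals all_analysis.
Set Implicit Arguments. Unset Strict Implicit. Unset Printing Implicit Defensive.
Import Order.TTheory GRing.Theory Num.Theory.
Local Open Scope classical_set_scope.
Local Open Scope ring_scope.

Definition mutually_independent (R : realType) (d : measure_display)
  (T : measurableType d) (P : probability T R) (X : nat -> T -> R) : Prop :=
  forall (J : seq nat) (B : nat -> set R), uniq J ->
    (forall j, measurable (B j)) ->
    P [set w | forall j, j \in J -> B j (X j w)] =
      (\prod_(j <- J) P (X j @^-1` B j))%E.

Definition uniform_pm1_0 (R : realType) (d : measure_display)
  (T : measurableType d) (P : probability T R) (Y : T -> R) : Prop :=
  [/\ P (Y @^-1` [set -1]) = (3%:R^-1)%:E,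
      P (Y @^-1` [set 0]) = (3%:R^-1)%:E &
      P (Y @^-1` [set 1]) = (3%:R^-1)%:E].

(* Partial sums: X j stands for X_{j+1}, so S n = X_1 + ... + X_n. *)
Definition S (R : realType) (T : Type) (X : nat -> T -> R) (n : nat) (w : T) : R :=
  \sum_(j < n) X j w.

(* Event {R^(N)_n = (n mod N)} given X_0^(N) = x0, i.e.
   x0 + S_n is congruent to n modulo N. *)
Definition meet_at (R : realType) (T : Type) (X : nat -> T -> R)
  (N x0 n : nat) : set T :=
  [set w | exists k : int, x0%:R + S X n w - n%:R = k%:~R * N%:R].

(* P^(N)_R ( \bigcup_{n=1}^N {R^(N)_n = (n mod N)} ), where the product
   measure mu_N x P with mu_N uniform on {0,..,N-1} is written out:
   (1/N) * sum_{x0 < N} P(section at x0). *)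
Definition hit_prob (R : realType) (d : measure_display)
  (T : measurableType d) (P : probability T R) (X : nat -> T -> R)
  (N : nat) : \bar R :=
  ((N%:R^-1)%:E *
   \sum_(x0 < N) P [set w | exists n, (1 <= n <= N)%N /\ meet_at X N x0 n w])%E.

From HB Require Import structures.
From mathcomp Require Import all_boot all_order all_algebra.
From mathcomp Require Import all_classical all_reals all_analysis.
From mathcomp Require Import ring lra zify measurable_realfun.
Import Order.TTheory GRing.Theory Num.Theory.
Local Open Scope classical_set_scope.
Local Open Scope ring_scope.
Set Implicit Arguments.

(* The walk meets the hunter started at x0 at time n iff the gap
   W_n = n - S_n is congruent to x0 modulo N. Since every step of W is 0, 1
   or 2, W never decreases, so for each level x0 the events "W first reaches
   x0 at step k+1" are disjoint in k. When X_k is -1 or 0 (probability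
   2/3), W does jump at step k+1 to a level W_{k+1} <= 2(k+1), which is one of
   the x0 < N as long as 2(k+1) < N. Summing over the roughly N/2 such k and
   exchanging the sums over k and x0 gives sum_{x0 < N} P(hit from x0) >= N/6,
   i.e. a hitting probability of at least 1/6. For N <= 2 the event X_1 = 1
   alone already gives this. *)

Section Gap.
Context {R : realType} {T : Type} (X : nat -> T -> R).

Definition gap (k : nat) (w : T) : R := k%:R - S X k w.

Lemma gapS k w : gap k.+1 w = gap k w + 1 - X k w.
Proof. by rewrite /gap /S big_ord_recr /= -addn1 natrD; ring. Qed.

Lemma le_gap w k k' : (forall j, (j < k')%N -> X j w <= 1) ->
  (k <= k')%N -> gap k w <= gap k' w.
Proof.
move=> X_le1; elim: k' X_le1 => [|k' IH] X_le1; first by rewrite leqn0 => /eqP ->.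
rewrite leq_eqVlt => /orP[/eqP -> //|lt_kk'].
apply: le_trans (IH (fun j lt_jk' => X_le1 j (ltnW lt_jk')) lt_kk') _.
by rewrite gapS; have := X_le1 k' (ltnSn _); lra.
Qed.

Lemma gap_natE w k :
  (forall j, (j < k)%N -> [\/ X j w = -1, X j w = 0 | X j w = 1]) ->
  exists2 m : nat, gap k w = m%:R & (m <= 2 * k)%N.
Proof.
elim: k => [|k IH] X_val; first by exists 0%N; rewrite // /gap /S big_ord0 subr0.
have [m gap_m le_m] := IH (fun j lt_jk => X_val j (ltnW lt_jk)).
rewrite gapS gap_m; case: (X_val k (ltnSn _)) => ->.
- by exists m.+2; [rewrite -addn2 natrD; ring | lia].
- by exists m.+1; [rewrite -addn1 natrD; ring | lia].
- by exists m; [ring | lia].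
Qed.

(* The steps are in {-1, 0, 1} only almost surely, so monotonicity of the gap
   has to be built into the event. *)
Definition steps_le1 (k : nat) : set T :=
  [set w | forall j, (j <= k)%N -> X j w <= 1].

Definition crossing (x0 k : nat) : set T :=
  gap k.+1 @^-1` [set x0%:R] `&` gap k @^-1` `]-oo, x0%:R[ `&` steps_le1 k.

Lemma trivIset_crossing_step x0 : trivIset setT (crossing x0).
Proof.
move=> i j _ _ [w [[[gap_i lt_i] le1_i] [[gap_j lt_j] le1_j]]].
move: lt_i lt_j; rewrite /= !in_itv /= => lt_i lt_j.
wlog le_ij : i j gap_i lt_i le1_i gap_j lt_j le1_j / (i <= j)%N.
  by move=> H; case: (leqP i j) => [|/ltnW] ?; [|apply/esym]; exact: H.
move: le_ij; rewrite leq_eqVlt => /orP[/eqP //|lt_ij]; exfalso.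
have : gap i.+1 w <= gap j w.
  by apply: le_gap => // l lt_lj; apply: le1_j; exact: ltnW.
by rewrite gap_i leNgt lt_j.
Qed.

Lemma trivIset_crossing_level k : trivIset setT (crossing ^~ k).
Proof.
move=> i j _ _ [w [[[gap_i _] _] [[gap_j _] _]]].
by apply/eqP; rewrite -(eqr_nat R) -gap_i -gap_j.
Qed.

Lemma crossing_sub_meet_at N x0 k : crossing x0 k `<=` meet_at X N x0 k.+1.
Proof. by move=> w [[gap_x0 _] _]; exists 0; rewrite mul0r -gap_x0 /gap; ring. Qed.

Definition climb_values (k j : nat) : set R :=
  if j == k then [set -1; 0] else [set -1; 0; 1].

Definition climb (k : nat) : set T :=
  [set w | forall j, j \in iota 0 k.+1 -> climb_values k j (X j w)].

Lemma climb_sub_crossing N k : (2 * k.+1 < N)%N ->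
  climb k `<=` \big[setU/set0]_(x0 < N) crossing x0 k.
Proof.
move=> lt_kN w climb_w; rewrite -(bigcup_mkord N (crossing ^~ k)).
have X_val j : (j <= k)%N -> [\/ X j w = -1, X j w = 0 | X j w = 1].
  move=> le_jk; have := climb_w j; rewrite mem_iota add0n ltnS le_jk /climb_values.
  case: eqP => _ /(_ isT); first by case=> ->; [exact: Or31 | exact: Or32].
  by case=> [[]|] ->; [exact: Or31 | exact: Or32 | exact: Or33].
have [m gap_m le_m] := @gap_natE w k (fun j lt_jk => X_val j (ltnW lt_jk)).
have le1_w : steps_le1 k w by move=> j /X_val[] ->; lra.
have : X k w = -1 \/ X k w = 0.
  have := climb_w k; rewrite mem_iota add0n ltnS leqnn /climb_values eqxx.
  by case/(_ isT) => ->; [left | right].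
have cross_w (x0 : nat) : gap k.+1 w = x0%:R -> (m < x0)%N -> crossing x0 k w.
  by move=> gap_x0 lt_mx0; split => //; split => //=; rewrite in_itv /= gap_m ltr_nat.
case=> X_k.
- exists m.+2; first by rewrite /=; lia.
  by apply: cross_w => //; rewrite gapS gap_m X_k -addn2 natrD; ring.
- exists m.+1; first by rewrite /=; lia.
  by apply: cross_w => //; rewrite gapS gap_m X_k -addn1 natrD; ring.
Qed.

Definition hit (N x0 : nat) : set T :=
  [set w | exists n, (1 <= n <= N)%N /\ meet_at X N x0 n w].

Lemma crossings_sub_hit N x0 m : (m <= N)%N ->
  \big[setU/set0]_(k < m) crossing x0 k `<=` hit N x0.
Proof.
rewrite -(bigcup_mkord m (crossing x0)) => le_mN w [k /= lt_km cross_w].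
by exists k.+1; split; [lia | exact: crossing_sub_meet_at].
Qed.

End Gap.

Lemma measurable_preimage (R : realType) d (T : measurableType d)
  (f : T -> R) (Y : set R) :
  measurable_fun setT f -> measurable Y -> measurable (f @^-1` Y).
Proof. by move=> mf mY; have := mf measurableT Y mY; rewrite setTI. Qed.

Section Measurability.
Context {R : realType} {d : measure_display} {T : measurableType d}.
Variable X : nat -> T -> R.
Hypothesis mX : forall j, measurable_fun setT (X j).

Lemma measurable_gap k : measurable_fun setT (gap X k).
Proof. by apply: measurable_funB; [exact: measurable_cst | exact: measurable_sum]. Qed.

Lemma measurable_steps_le1 k : measurable (steps_le1 X k).
Proof.
have -> : steps_le1 X k = \bigcap_(j in [set j | (j <= k)%N]) X j @^-1` `]-oo, 1].
  by apply/seteqP; split => w /= le1_w j /le1_w; rewrite /= in_itv.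
apply: bigcap_measurable => [|j _]; first by exists 0%N.
by apply: measurable_preimage => //; exact: measurable_itv.
Qed.

Lemma measurable_crossing x0 k : measurable (crossing X x0 k).
Proof.
apply: measurableI; last exact: measurable_steps_le1.
apply: measurableI; apply: measurable_preimage; try exact: measurable_gap.
  exact: measurable_set1.
exact: measurable_itv.
Qed.

Lemma measurable_climb k : measurable (climb X k).
Proof.
have -> : climb X k = \bigcap_(j in [set j | (j <= k)%N]) X j @^-1` climb_values (R := R) k j.
  apply/seteqP; split => w /= climb_w j; last by rewrite mem_iota add0n ltnS => /climb_w.
  by move=> le_jk; apply: climb_w; rewrite mem_iota add0n ltnS.
apply: bigcap_measurable => [|j _]; first by exists 0%N.
apply: measurable_preimage => //.
by rewrite /climb_values; case: eqP => _; repeat apply: measurableU; exact: measurable_set1.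
Qed.

Lemma measurable_meet_at N x0 n : measurable (meet_at X N x0 n).
Proof.
have -> : meet_at X N x0 n = \bigcup_(k : int)
    ((fun w => x0%:R + S X n w - n%:R) @^-1` [set k%:~R * N%:R]).
  by apply/seteqP; split => w /= [k eq_k]; exists k.
apply: countable_bigcupT_measurable => [|k]; first exact: countableP.
apply: measurable_preimage; last exact: measurable_set1.
apply: measurable_funB; last exact: measurable_cst.
by apply: measurable_funD; [exact: measurable_cst | exact: measurable_sum].
Qed.

Lemma measurable_hit N x0 : measurable (hit X N x0).
Proof.
have -> : hit X N x0 = \bigcup_(n in [set n | (1 <= n <= N)%N]) meet_at X N x0 n.
  by apply/seteqP; split => w /= [n]; [case=> ? ?|]; exists n.
by apply: bigcup_measurable => n _; exact: measurable_meet_at.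
Qed.

End Measurability.

Section Probability.
Context {R : realType} {d : measure_display} {T : measurableType d}.
Variables (P : probability T R) (X : nat -> T -> R).
Hypothesis mX : forall j, measurable_fun setT (X j).
Hypothesis X_indep : mutually_independent P X.
Hypothesis X_unif : forall j, uniform_pm1_0 P (X j).

Lemma prob_pm1_0 (Y : T -> R) : measurable_fun setT Y -> uniform_pm1_0 P Y ->
  P (Y @^-1` [set -1; 0]) = (2%:R / 3%:R)%:E.
Proof.
move=> mY [P_m1 P_0 _].
transitivity (P (Y @^-1` [set (-1)%R]) + P (Y @^-1` [set 0%R]))%E.
  rewrite preimage_setU measureU //; try exact: measurable_preimage.
  by apply/seteqP; split => w //= [->]; lra.
by rewrite P_m1 P_0 -EFinD; congr EFin; field.
Qed.

Lemma prob_pm1_0_1 (Y : T -> R) : measurable_fun setT Y -> uniform_pm1_0 P Y ->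
  P (Y @^-1` [set -1; 0; 1]) = 1%E.
Proof.
move=> mY unifY; have [_ _ P_1] := unifY.
transitivity (P (Y @^-1` [set (-1)%R; 0%R]) + P (Y @^-1` [set 1%R]))%E.
  rewrite [in LHS]preimage_setU measureU //;
    try by apply: measurable_preimage => //; apply: measurableU.
  by apply/seteqP; split => w //= [[->|->]]; lra.
by rewrite prob_pm1_0 // P_1 -EFinD; congr EFin; field.
Qed.

Lemma prob_climb k : P (climb X k) = (2%:R / 3%:R)%:E.
Proof.
rewrite /climb X_indep ?iota_uniq //; last first.
  by move=> j; rewrite /climb_values; case: eqP => _;
    repeat apply: measurableU; exact: measurable_set1.
rewrite -addn1 iotaD big_cat /= add0n big_seq1 /climb_values eqxx prob_pm1_0 //.
rewrite big_seq big1 ?mul1e // => j; rewrite mem_iota add0n => /andP[_ lt_jk].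
by rewrite (introF eqP) ?prob_pm1_0_1 // => eq_jk; rewrite eq_jk ltnn in lt_jk.
Qed.

Lemma sum_crossing_ge N k : (2 * k.+1 < N)%N ->
  ((2%:R / 3%:R)%:E <= \sum_(x0 < N) P (crossing X x0 k))%E.
Proof.
move=> lt_kN; rewrite -(prob_climb k) -(@measure_bigsetU _ _ _ P (crossing X ^~ k)).
- apply: le_measure; rewrite ?inE; first exact: measurable_climb.
    by apply: bigsetU_measurable => x0 _; exact: measurable_crossing.
  exact: climb_sub_crossing.
- by move=> x0; exact: measurable_crossing.
- exact: trivIset_crossing_level.
Qed.

Lemma sum_crossing_le_hit N x0 m : (m <= N)%N ->
  (\sum_(k < m) P (crossing X x0 k) <= P (hit X N x0))%E.
Proof.
move=> le_mN; rewrite -measure_bigsetU.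
- apply: le_measure; rewrite ?inE; last exact: crossings_sub_hit.
    by apply: bigsetU_measurable => k _; exact: measurable_crossing.
  exact: measurable_hit.
- by move=> k; exact: measurable_crossing.
- exact: trivIset_crossing_step.
Qed.

Lemma sum_hit_ge_small N : (0 < N)%N ->
  ((3%:R^-1)%:E <= \sum_(x0 < N) P (hit X N x0))%E.
Proof.
case: N => // N _; rewrite big_ord_recl /=.
apply: le_trans (leeDl _ _); last by apply: sume_ge0.
have [_ _ <-] := X_unif 0%N.
apply: le_measure; rewrite ?inE; last 1 first.
- move=> w /= X0_1; exists 1%N; split => //; exists 0.
  by rewrite mul0r /S big_ord1 X0_1; ring.
- by apply: measurable_preimage => //; exact: measurable_set1.
- exact: measurable_hit.
Qed.

Lemma sum_hit_ge_large N : (2 < N)%N ->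
  ((N%:R / 6%:R)%:E <= \sum_(x0 < N) P (hit X N x0))%E.
Proof.
move=> lt2N; pose m := (N.-1 %/ 2)%N.
have lt_kN (k : 'I_m) : (2 * k.+1 < N)%N by have := ltn_ord k; rewrite /m; lia.
apply: (@le_trans _ _ (\sum_(k < m) \sum_(x0 < N) P (crossing X x0 k))%E).
  apply: (@le_trans _ _ (\sum_(k < m) (2%:R / 3%:R)%:E)%E).
    rewrite sumEFin sumr_const card_ord lee_fin.
    have : (N <= 4 * m)%N by rewrite /m; lia.
    by rewrite -(ler_nat R) natrM -mulr_natr; lra.
  by apply: lee_sum => k _; exact: sum_crossing_ge.
rewrite exchange_big /=; apply: lee_sum => x0 _.
by apply: sum_crossing_le_hit; rewrite /m; lia.
Qed.

Lemma sum_hit_ge N : (0 < N)%N ->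
  ((N%:R / 6%:R)%:E <= \sum_(x0 < N) P (hit X N x0))%E.
Proof.
move=> N_gt0; case: (leqP N 2) => [le_N2|]; last exact: sum_hit_ge_large.
apply: (@le_trans _ _ (3%:R^-1)%:E); last exact: sum_hit_ge_small.
by rewrite lee_fin; move: le_N2; rewrite -(ler_nat R); lra.
Qed.

End Probability.

Theorem proposition2 (R : realType) (d : measure_display)
  (T : measurableType d) (P : probability T R) (X : nat -> T -> R) :
  (forall j, measurable_fun setT (X j)) ->
  mutually_independent P X ->
  (forall j, uniform_pm1_0 P (X j)) ->
  exists c7 : R, 0 < c7 /\
    forall N : nat, (0 < N)%N -> (c7%:E <= hit_prob P X N)%E.
Proof.
move=> mX X_indep X_unif; exists (6%:R^-1); split => [|N N_gt0]; first by [].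
rewrite /hit_prob; apply: le_trans (lee_wpmul2l _ (sum_hit_ge mX X_indep X_unif N N_gt0)).
  by rewrite -EFinM lee_fin mulrA mulVf ?mul1r // pnatr_eq0 -lt0n.
by rewrite lee_fin invr_ge0.
Qed.
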